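(* For every sequent $\Gamma\Rightarrow\Delta$: if $\Gamma\Rightarrow\Delta$ is provable in $\mathsf{Grz}_\infty+\mathsf{cut}$, then $\Gamma\Rightarrow\Delta$ is provable in $\mathsf{Grz}_\infty$.
   Context: Formulas are built from $\bot$ and atomic propositions $p$ using $\to$ and the unary modality $\Box$. A sequent is an expression $\Gamma\Rightarrow\Delta$ where $\Gamma,\Delta$ are finite multisets of formulas; for a multiset $\Pi=A_1,\dots,A_n$, $\Box\Pi$ denotes $\Box A_1,\dots,\Box A_n$. The sequent calculus $\mathsf{Grz}_\infty$ has initial sequents $\Gamma,p\Rightarrow p,\Delta$ ($p$ atomic) and $\Gamma,\bot\Rightarrow\Delta$, and the rules: $(\to_L)$ from $\Gamma,B\Rightarrow\Delta$ and $\Gamma\Rightarrow A,\Delta$ infer $\Gamma,A\to B\Rightarrow\Delta$; $(\to_R)$ from $\Gamma,A\Rightarrow B,\Delta$ infer $\Gamma\Rightarrow A\to B,\Delta$; $(\mathsf{refl})$ from $\Gamma,B,\Box B\Rightarrow\Delta$ infer $\Gamma,\Box B\Rightarrow\Delta$; $(\Box)$ from the left premise $\Gamma,\Box\Pi\Rightarrow A,\Delta$ and the right premise $\Box\Pi\Rightarrow A$ infer $\Gamma,\Box\Pi\Rightarrow\Box A,\Delta$. The system $\mathsf{Grz}_\infty+\mathsf{cut}$ additionally has the rule $(\mathsf{cut})$: from $\Gamma\Rightarrow A,\Delta$ and $\Gamma,A\Rightarrow\Delta$ infer $\Gamma\Rightarrow\Delta$. An $\infty$-proof in one of these systems is a possibly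 infinite tree whose nodes are labelled by sequents, built according to the rules of the system, whose leaves are labelled by initial sequents, and such that every infinite branch passes through a right premise of the rule $(\Box)$ infinitely many times. A sequent is provable in the system if there is an $\infty$-proof with root labelled by it. *)

From Stdlib Require Import List Permutation.
Import ListNotations.

Inductive form : Type :=
| Bot : form
| Var : nat -> form
| Imp : form -> form -> form
| Box : form -> form.

(* A sequent Gamma => Delta; multisets are represented by lists,
   and all rules are matched up to permutation (multiset equality). *)
Definition sequent : Type := (list form * list form)%type.

Inductive rule : Type := RInit | RImpL | RImpR | RRefl | RBox | RCut.

Definition arity (r : rule) : nat :=
  match r with
  | RInit => 0 | RImpL => 2 | RImpR => 1 | RRefl => 1 | RBox => 2 | RCut => 2
  end.

(* [rule_inst withcut s r ps]: s follows by rule r from the premises ps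
   (in order; for RBox, the premise at index 1 is the right premise). *)
Definition rule_inst (withcut : bool) (s : sequent) (r : rule) (ps : list sequent) : Prop :=
  let (G, D) := s in
  match r with
  | RInit => ps = [] /\
      ((exists p G0 D0, Permutation G (Var p :: G0) /\ Permutation D (Var p :: D0))
       \/ (exists G0, Permutation G (Bot :: G0)))
  | RImpL => exists A B G0, Permutation G (Imp A B :: G0) /\
      ps = [(B :: G0, D); (G0, A :: D)]
  | RImpR => exists A B D0, Permutation D (Imp A B :: D0) /\
      ps = [(A :: G, B :: D0)]
  | RRefl => exists B G0, Permutation G (Box B :: G0) /\
      ps = [(B :: Box B :: G0, D)]
  | RBox => exists Pi A G0 D0, Permutation G (map Box Pi ++ G0) /\
      Permutation D (Box A :: D0) /\
      ps = [(G, A :: D0); (map Box Pi, [A])]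
  | RCut => withcut = true /\ exists A, ps = [(G, A :: D); (A :: G, D)]
  end.

(* A possibly infinite tree: nodes addressed by reversed lists of child
   indices; T w gives the sequent label and rule applied at node w. *)
Definition ptree : Type := list nat -> (sequent * rule).

Inductive in_tree (T : ptree) : list nat -> Prop :=
| in_root : in_tree T []
| in_child : forall w i, in_tree T w -> i < arity (snd (T w)) -> in_tree T (i :: w).

Fixpoint branch (f : nat -> nat) (n : nat) : list nat :=
  match n with
  | 0 => []
  | S m => f m :: branch f m
  end.

Definition locally_correct (withcut : bool) (T : ptree) : Prop :=
  forall w, in_tree T w ->
    rule_inst withcut (fst (T w)) (snd (T w))
      (map (fun i => fst (T (i :: w))) (seq 0 (arity (snd (T w))))).

Definition progressing (T : ptree) : Prop :=
  forall f : nat -> nat, (forall n, in_tree T (branch f n)) ->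
    forall n, exists m, n <= m /\ snd (T (branch f m)) = RBox /\ f m = 1.

Definition inf_proof (withcut : bool) (T : ptree) : Prop :=
  locally_correct withcut T /\ progressing T.

Definition provable (withcut : bool) (s : sequent) : Prop :=
  exists T : ptree, inf_proof withcut T /\ fst (T []) = s.

(* Both calculi have provability given by a greatest fixed point: a sequent is
   provable iff it lies in a set X of sequents each of which has a finite
   derivation whose right (Box)-premises lie in X again (progress says exactly
   that the parts of a proof between right (Box)-premises are well-founded).
   For such an X of the calculus with cut, the closure Deriv X of X under all
   rules and cut is such a set for the cut-free calculus, because cut is
   admissible for finite cut-free derivations over Deriv X.  The only delicate
   case is a cut on Box B against a (Box) rule introducing it: the right
   premise Box B, Box Pi => C of a (Box) rule above the cut must lose Box B,
   and this is done inside Deriv X, where cut is available. *)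

From Stdlib Require Import Arith List Permutation Lia Classical ClassicalEpsilon.
Import ListNotations.

Definition seqrel : Type := list form -> list form -> Prop.

Definition form_eq_dec : forall x y : form, {x = y} + {x <> y}.
Proof. do 2 decide equality. Qed.

Ltac perm_solve :=
  apply (proj2 (Permutation_count_occ form_eq_dec _ _));
  let x := fresh "x" in intro x;
  repeat match goal with H : Permutation _ _ |- _ =>
    let h := fresh "hc" in
    pose proof (proj1 (Permutation_count_occ form_eq_dec _ _) H x) as h; clear H end;
  repeat progress (simpl in *; rewrite ?count_occ_app in * );
  repeat match goal with
   | |- context [form_eq_dec ?a ?b] => destruct (form_eq_dec a b)
   | H : context [form_eq_dec ?a ?b] |- _ => destruct (form_eq_dec a b)
  end; subst; try congruence; lia.

Lemma perm_cons_cases (x y : form) L M : Permutation (x :: L) (y :: M) ->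
  (x = y /\ Permutation L M) \/
  (exists K, Permutation L (y :: K) /\ Permutation M (x :: K)).
Proof.
  intro H. destruct (form_eq_dec x y) as [->|n].
  - left; split; auto. eapply Permutation_cons_inv; eauto.
  - right. assert (Hi : In x M).
    { assert (Hx : In x (y :: M)) by (eapply Permutation_in; eauto; left; auto).
      destruct Hx; [congruence|auto]. }
    apply in_split in Hi as (M1 & M2 & ->). exists (M1 ++ M2). split.
    + apply Permutation_cons_inv with x. perm_solve.
    + perm_solve.
Qed.

Lemma perm_cons_neq (x y : form) L M : Permutation (x :: L) (y :: M) -> x <> y ->
  exists K, Permutation L (y :: K) /\ Permutation M (x :: K).
Proof.
  intros H n. destruct (perm_cons_cases _ _ _ _ H) as [[e _]|h]; [congruence|exact h].
Qed.

Lemma perm_cons_two_neq (x y : form) L M : Permutation (x :: L) (y :: y :: M) -> x <> y ->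
  exists K, Permutation M (x :: K) /\ Permutation L (y :: y :: K).
Proof.
  intros H n.
  destruct (perm_cons_neq _ _ _ _ H n) as (K1 & k1 & k2).
  assert (Hq : Permutation (x :: K1) (y :: M)) by perm_solve.
  destruct (perm_cons_neq _ _ _ _ Hq n) as (K2 & k3 & k4).
  exists K2; split; perm_solve.
Qed.

Lemma perm_cons_boxes x L Pi M : Permutation (x :: L) (map Box Pi ++ M) ->
  (forall B, x <> Box B) ->
  exists K, Permutation M (x :: K) /\ Permutation L (map Box Pi ++ K).
Proof.
  intros H nb.
  assert (Hx : In x (map Box Pi ++ M)) by (eapply Permutation_in; eauto; left; auto).
  apply in_app_or in Hx as [Hx|Hx].
  - apply in_map_iff in Hx as (B & e & _). exfalso; apply (nb B); auto.
  - apply in_split in Hx as (M1 & M2 & ->). exists (M1 ++ M2). split.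
    + perm_solve.
    + apply Permutation_cons_inv with x. perm_solve.
Qed.

Inductive Grz (V : seqrel) : seqrel :=
| grz_atom G D p G0 D0 :
    Permutation G (Var p :: G0) -> Permutation D (Var p :: D0) -> Grz V G D
| grz_bot G D G0 : Permutation G (Bot :: G0) -> Grz V G D
| grz_impL G D A B G0 : Permutation G (Imp A B :: G0) ->
    Grz V (B :: G0) D -> Grz V G0 (A :: D) -> Grz V G D
| grz_impR G D A B D0 : Permutation D (Imp A B :: D0) ->
    Grz V (A :: G) (B :: D0) -> Grz V G D
| grz_refl G D B G0 : Permutation G (Box B :: G0) ->
    Grz V (B :: Box B :: G0) D -> Grz V G D
| grz_box G D Pi A G0 D0 :
    Permutation G (map Box Pi ++ G0) -> Permutation D (Box A :: D0) ->
    Grz V G (A :: D0) -> V (map Box Pi) [A] -> Grz V G D.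

Lemma Grz_perm V : forall G D, Grz V G D ->
  forall G' D', Permutation G G' -> Permutation D D' -> Grz V G' D'.
Proof.
  induction 1; intros G' D' h1 h2.
  - apply grz_atom with p G0 D0; perm_solve.
  - apply grz_bot with G0; perm_solve.
  - apply grz_impL with A B G0; [perm_solve | apply IHGrz1; perm_solve | apply IHGrz2; perm_solve].
  - apply grz_impR with A B D0; [perm_solve | apply IHGrz; perm_solve].
  - apply grz_refl with B G0; [perm_solve | apply IHGrz; perm_solve].
  - apply grz_box with Pi A G0 D0; [perm_solve | perm_solve | apply IHGrz; perm_solve | auto].
Qed.

Ltac grz_perm h := eapply Grz_perm; [exact h | perm_solve | perm_solve].

Lemma Grz_mono (V V' : seqrel) : (forall G D, V G D -> V' G D) ->
  forall G D, Grz V G D -> Grz V' G D.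
Proof.
  intros hv. induction 1.
  - eapply grz_atom; eauto.
  - eapply grz_bot; eauto.
  - eapply grz_impL; eauto.
  - eapply grz_impR; eauto.
  - eapply grz_refl; eauto.
  - eapply grz_box; eauto.
Qed.

Section GrzInversion.
Variable V : seqrel.

Lemma Grz_weaken G' D' : forall G D, Grz V G D -> Grz V (G' ++ G) (D' ++ D).
Proof.
  induction 1.
  - apply grz_atom with p (G' ++ G0) (D' ++ D0); perm_solve.
  - apply grz_bot with (G' ++ G0); perm_solve.
  - apply grz_impL with A B (G' ++ G0); [perm_solve | grz_perm IHGrz1 | grz_perm IHGrz2].
  - apply grz_impR with A B (D' ++ D0); [perm_solve | grz_perm IHGrz].
  - apply grz_refl with B (G' ++ G0); [perm_solve | grz_perm IHGrz].
  - apply grz_box with Pi A (G' ++ G0) (D' ++ D0); [perm_solve | perm_solve | grz_perm IHGrz | auto].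
Qed.

Lemma Grz_weakenL A G D : Grz V G D -> Grz V (A :: G) D.
Proof. exact (Grz_weaken [A] [] G D). Qed.

Lemma Grz_impL_inv : forall G D, Grz V G D ->
  forall A' B' G0', Permutation G (Imp A' B' :: G0') ->
  Grz V (B' :: G0') D /\ Grz V G0' (A' :: D).
Proof.
  induction 1; intros A' B' G0' Hp.
  - assert (Hq : Permutation (Var p :: G0) (Imp A' B' :: G0')) by perm_solve.
    destruct (perm_cons_neq _ _ _ _ Hq ltac:(discriminate)) as (K & k1 & k2).
    split; [apply grz_atom with p (B' :: K) D0 | apply grz_atom with p K (A' :: D0)];
      perm_solve.
  - assert (Hq : Permutation (Bot :: G0) (Imp A' B' :: G0')) by perm_solve.
    destruct (perm_cons_neq _ _ _ _ Hq ltac:(discriminate)) as (K & k1 & k2).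
    split; [apply grz_bot with (B' :: K) | apply grz_bot with K]; perm_solve.
  - assert (Hq : Permutation (Imp A B :: G0) (Imp A' B' :: G0')) by perm_solve.
    destruct (perm_cons_cases _ _ _ _ Hq) as [[e k]|(K & k1 & k2)].
    + injection e as -> ->. split; [grz_perm H0 | grz_perm H1].
    + destruct (IHGrz1 A' B' (B :: K)) as [h1 h2]; [perm_solve|].
      destruct (IHGrz2 A' B' K) as [h3 h4]; [perm_solve|].
      split.
      * apply grz_impL with A B (B' :: K); [perm_solve | grz_perm h1 | grz_perm h3].
      * apply grz_impL with A B K; [perm_solve | grz_perm h2 | grz_perm h4].
  - destruct (IHGrz A' B' (A :: G0')) as [h1 h2]; [perm_solve|].
    split.
    + apply grz_impR with A B D0; [perm_solve | grz_perm h1].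
    + apply grz_impR with A B (A' :: D0); [perm_solve | grz_perm h2].
  - assert (Hq : Permutation (Box B :: G0) (Imp A' B' :: G0')) by perm_solve.
    destruct (perm_cons_neq _ _ _ _ Hq ltac:(discriminate)) as (K & k1 & k2).
    destruct (IHGrz A' B' (B :: Box B :: K)) as [h1 h2]; [perm_solve|].
    split.
    + apply grz_refl with B (B' :: K); [perm_solve | grz_perm h1].
    + apply grz_refl with B K; [perm_solve | grz_perm h2].
  - destruct (IHGrz A' B' G0' Hp) as [h1 h2].
    assert (Hq : Permutation (Imp A' B' :: G0') (map Box Pi ++ G0)) by perm_solve.
    destruct (perm_cons_boxes _ _ _ _ Hq ltac:(discriminate)) as (K & k1 & k2).
    split.
    + apply grz_box with Pi A (B' :: K) D0; [perm_solve | perm_solve | grz_perm h1 | auto].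
    + apply grz_box with Pi A K (A' :: D0); [perm_solve | perm_solve | grz_perm h2 | auto].
Qed.

Lemma Grz_impR_inv : forall G D, Grz V G D ->
  forall A' B' D0', Permutation D (Imp A' B' :: D0') -> Grz V (A' :: G) (B' :: D0').
Proof.
  induction 1; intros A' B' D0' Hp.
  - assert (Hq : Permutation (Var p :: D0) (Imp A' B' :: D0')) by perm_solve.
    destruct (perm_cons_neq _ _ _ _ Hq ltac:(discriminate)) as (K & k1 & k2).
    apply grz_atom with p (A' :: G0) (B' :: K); perm_solve.
  - apply grz_bot with (A' :: G0); perm_solve.
  - pose proof (IHGrz1 A' B' D0' Hp) as h1.
    pose proof (IHGrz2 A' B' (A :: D0') ltac:(perm_solve)) as h2.
    apply grz_impL with A B (A' :: G0); [perm_solve | grz_perm h1 | grz_perm h2].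
  - assert (Hq : Permutation (Imp A B :: D0) (Imp A' B' :: D0')) by perm_solve.
    destruct (perm_cons_cases _ _ _ _ Hq) as [[e k]|(K & k1 & k2)].
    + injection e as -> ->. grz_perm H0.
    + pose proof (IHGrz A' B' (B :: K) ltac:(perm_solve)) as h.
      apply grz_impR with A B (B' :: K); [perm_solve | grz_perm h].
  - pose proof (IHGrz A' B' D0' Hp) as h.
    apply grz_refl with B (A' :: G0); [perm_solve | grz_perm h].
  - assert (Hq : Permutation (Box A :: D0) (Imp A' B' :: D0')) by perm_solve.
    destruct (perm_cons_neq _ _ _ _ Hq ltac:(discriminate)) as (K & k1 & k2).
    pose proof (IHGrz A' B' (A :: K) ltac:(perm_solve)) as h.
    apply grz_box with Pi A (A' :: G0) (B' :: K); [perm_solve | perm_solve | grz_perm h | auto].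
Qed.

Lemma Grz_boxR_inv : forall G D, Grz V G D ->
  forall A' D0', Permutation D (Box A' :: D0') -> Grz V G (A' :: D0').
Proof.
  induction 1; intros A' D0' Hp.
  - assert (Hq : Permutation (Var p :: D0) (Box A' :: D0')) by perm_solve.
    destruct (perm_cons_neq _ _ _ _ Hq ltac:(discriminate)) as (K & k1 & k2).
    apply grz_atom with p G0 (A' :: K); perm_solve.
  - apply grz_bot with G0; perm_solve.
  - pose proof (IHGrz1 A' D0' Hp) as h1.
    pose proof (IHGrz2 A' (A :: D0') ltac:(perm_solve)) as h2.
    apply grz_impL with A B G0; [perm_solve | grz_perm h1 | grz_perm h2].
  - assert (Hq : Permutation (Imp A B :: D0) (Box A' :: D0')) by perm_solve.
    destruct (perm_cons_neq _ _ _ _ Hq ltac:(discriminate)) as (K & k1 & k2).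
    pose proof (IHGrz A' (B :: K) ltac:(perm_solve)) as h.
    apply grz_impR with A B (A' :: K); [perm_solve | grz_perm h].
  - pose proof (IHGrz A' D0' Hp) as h.
    apply grz_refl with B G0; [perm_solve | grz_perm h].
  - assert (Hq : Permutation (Box A :: D0) (Box A' :: D0')) by perm_solve.
    destruct (perm_cons_cases _ _ _ _ Hq) as [[e k]|(K & k1 & k2)].
    + injection e as ->. grz_perm H1.
    + pose proof (IHGrz A' (A :: K) ltac:(perm_solve)) as h.
      apply grz_box with Pi A G0 (A' :: K); [perm_solve | perm_solve | grz_perm h | auto].
Qed.

Lemma Grz_botR_elim : forall G D, Grz V G D ->
  forall D0', Permutation D (Bot :: D0') -> Grz V G D0'.
Proof.
  induction 1; intros D0' Hp.
  - assert (Hq : Permutation (Var p :: D0) (Bot :: D0')) by perm_solve.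
    destruct (perm_cons_neq _ _ _ _ Hq ltac:(discriminate)) as (K & k1 & k2).
    apply grz_atom with p G0 K; perm_solve.
  - apply grz_bot with G0; perm_solve.
  - pose proof (IHGrz1 D0' Hp) as h1.
    pose proof (IHGrz2 (A :: D0') ltac:(perm_solve)) as h2.
    apply grz_impL with A B G0; [perm_solve | grz_perm h1 | grz_perm h2].
  - assert (Hq : Permutation (Imp A B :: D0) (Bot :: D0')) by perm_solve.
    destruct (perm_cons_neq _ _ _ _ Hq ltac:(discriminate)) as (K & k1 & k2).
    pose proof (IHGrz (B :: K) ltac:(perm_solve)) as h.
    apply grz_impR with A B K; [perm_solve | grz_perm h].
  - pose proof (IHGrz D0' Hp) as h.
    apply grz_refl with B G0; [perm_solve | grz_perm h].
  - assert (Hq : Permutation (Box A :: D0) (Bot :: D0')) by perm_solve.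
    destruct (perm_cons_neq _ _ _ _ Hq ltac:(discriminate)) as (K & k1 & k2).
    pose proof (IHGrz (A :: K) ltac:(perm_solve)) as h.
    apply grz_box with Pi A G0 K; [perm_solve | perm_solve | grz_perm h | auto].
Qed.

Lemma Grz_contr_atomR : forall G D, Grz V G D ->
  forall p D0', Permutation D (Var p :: Var p :: D0') -> Grz V G (Var p :: D0').
Proof.
  induction 1; intros q D0' Hp.
  - assert (Hq : Permutation (Var p :: D0) (Var q :: Var q :: D0')) by perm_solve.
    destruct (perm_cons_cases _ _ _ _ Hq) as [[e k]|(K & k1 & k2)].
    + injection e as ->. apply grz_atom with q G0 D0'; perm_solve.
    + apply grz_atom with p G0 K; perm_solve.
  - apply grz_bot with G0; perm_solve.
  - pose proof (IHGrz1 q D0' Hp) as h1.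
    pose proof (IHGrz2 q (A :: D0') ltac:(perm_solve)) as h2.
    apply grz_impL with A B G0; [perm_solve | grz_perm h1 | grz_perm h2].
  - assert (Hq : Permutation (Imp A B :: D0) (Var q :: Var q :: D0')) by perm_solve.
    destruct (perm_cons_two_neq _ _ _ _ Hq ltac:(discriminate)) as (K & k1 & k2).
    pose proof (IHGrz q (B :: K) ltac:(perm_solve)) as h.
    apply grz_impR with A B (Var q :: K); [perm_solve | grz_perm h].
  - pose proof (IHGrz q D0' Hp) as h.
    apply grz_refl with B G0; [perm_solve | grz_perm h].
  - assert (Hq : Permutation (Box A :: D0) (Var q :: Var q :: D0')) by perm_solve.
    destruct (perm_cons_two_neq _ _ _ _ Hq ltac:(discriminate)) as (K & k1 & k2).
    pose proof (IHGrz q (A :: K) ltac:(perm_solve)) as h.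
    apply grz_box with Pi A G0 (Var q :: K); [perm_solve | perm_solve | grz_perm h | auto].
Qed.

End GrzInversion.

Inductive Deriv (W : seqrel) : seqrel :=
| dv_hyp G D : W G D -> Deriv W G D
| dv_perm G D G' D' : Deriv W G D -> Permutation G G' -> Permutation D D' -> Deriv W G' D'
| dv_weaken G D G' D' : Deriv W G D -> Deriv W (G' ++ G) (D' ++ D)
| dv_atom p G D : Deriv W (Var p :: G) (Var p :: D)
| dv_bot G D : Deriv W (Bot :: G) D
| dv_impL A B G D : Deriv W (B :: G) D -> Deriv W G (A :: D) -> Deriv W (Imp A B :: G) D
| dv_impR A B G D : Deriv W (A :: G) (B :: D) -> Deriv W G (Imp A B :: D)
| dv_refl B G D : Deriv W (B :: Box B :: G) D -> Deriv W (Box B :: G) D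
| dv_box Pi A G D : Deriv W (map Box Pi ++ G) (A :: D) -> Deriv W (map Box Pi) [A] ->
    Deriv W (map Box Pi ++ G) (Box A :: D)
| dv_cut A G D : Deriv W G (A :: D) -> Deriv W (A :: G) D -> Deriv W G D.

Ltac deriv_perm h := eapply dv_perm; [exact h | perm_solve | perm_solve].

Lemma Deriv_mono (W W' : seqrel) : (forall G D, W G D -> W' G D) ->
  forall G D, Deriv W G D -> Deriv W' G D.
Proof.
  intros hw. induction 1.
  - apply dv_hyp; auto.
  - eapply dv_perm; eauto.
  - apply dv_weaken; auto.
  - apply dv_atom.
  - apply dv_bot.
  - apply dv_impL; auto.
  - apply dv_impR; auto.
  - apply dv_refl; auto.
  - apply dv_box; auto.
  - eapply dv_cut; eauto.
Qed.

Lemma Deriv_idem W : forall G D, Deriv (Deriv W) G D -> Deriv W G D.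
Proof.
  induction 1.
  - auto.
  - eapply dv_perm; eauto.
  - apply dv_weaken; auto.
  - apply dv_atom.
  - apply dv_bot.
  - apply dv_impL; auto.
  - apply dv_impR; auto.
  - apply dv_refl; auto.
  - apply dv_box; auto.
  - eapply dv_cut; eauto.
Qed.

Lemma Grz_Deriv W : forall G D, Grz (Deriv W) G D -> Deriv W G D.
Proof.
  induction 1.
  - eapply dv_perm; [apply (dv_atom W p G0 D0) | perm_solve | perm_solve].
  - eapply dv_perm; [apply (dv_bot W G0 D) | perm_solve | perm_solve].
  - eapply dv_perm; [apply (dv_impL W A B G0 D); auto | perm_solve | perm_solve].
  - eapply dv_perm; [apply (dv_impR W A B G D0); auto | perm_solve | perm_solve].
  - eapply dv_perm; [apply (dv_refl W B G0 D); auto | perm_solve | perm_solve].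
  - eapply dv_perm; [apply (dv_box W Pi A G0 D0); auto; deriv_perm IHGrz
                    | perm_solve | perm_solve].
Qed.

Fixpoint debox (l : list form) : list form :=
  match l with [] => [] | Box B :: l' => B :: debox l' | _ :: l' => debox l' end.

Fixpoint nonboxed (l : list form) : list form :=
  match l with [] => [] | Box _ :: l' => nonboxed l' | a :: l' => a :: nonboxed l' end.

Lemma debox_split G : Permutation G (map Box (debox G) ++ nonboxed G).
Proof. induction G as [|a G IH]; [constructor|]. destruct a; simpl; perm_solve. Qed.

Lemma debox_app l1 l2 : debox (l1 ++ l2) = debox l1 ++ debox l2.
Proof.
  induction l1 as [|a l1 IH]; [reflexivity|]. destruct a; simpl; rewrite ?IH; reflexivity.
Qed.

Lemma debox_map_Box Pi : debox (map Box Pi) = Pi.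
Proof. induction Pi; simpl; congruence. Qed.

Lemma Permutation_debox l l' : Permutation l l' -> Permutation (debox l) (debox l').
Proof.
  induction 1.
  - constructor.
  - destruct x; simpl; auto.
  - destruct x; destruct y; simpl; try apply Permutation_refl; try constructor.
  - eapply Permutation_trans; eauto.
Qed.

Lemma Permutation_boxed_part G Pi G0 : Permutation G (map Box Pi ++ G0) ->
  Permutation (map Box (debox G)) (map Box Pi ++ map Box (debox G0)).
Proof.
  intro h. apply Permutation_debox in h. rewrite debox_app, debox_map_Box in h.
  rewrite <- map_app. apply Permutation_map. exact h.
Qed.

Section CutAdmissibility.
Variable W : seqrel.
Notation GW := (Grz (Deriv W)).

Lemma Grz_cut_atom p : forall GG D, GW GG D -> forall G, Permutation GG (Var p :: G) ->
  GW G (Var p :: D) -> GW G D.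
Proof.
  induction 1 as [G D q G0 D0 h1 h2 | G D G0 h1 | G D A1 A2 G0 h1 d1 IH1 d2 IH2
    | G D A1 A2 D0 h1 d1 IH1 | G D C G0 h1 d1 IH1 | G D Pi C G0 D0 h1 h2 d1 IH1 hv];
    intros G' Hp hl.
  - assert (Hq : Permutation (Var q :: G0) (Var p :: G')) by perm_solve.
    destruct (perm_cons_cases _ _ _ _ Hq) as [[e k]|(K & k1 & k2)].
    + injection e as ->.
      assert (hc : GW G' (Var p :: D0)) by (eapply Grz_contr_atomR; [exact hl | perm_solve]).
      grz_perm hc.
    + apply grz_atom with q K D0; perm_solve.
  - assert (Hq : Permutation (Bot :: G0) (Var p :: G')) by perm_solve.
    destruct (perm_cons_neq _ _ _ _ Hq ltac:(discriminate)) as (K & k1 & k2).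
    apply grz_bot with K; perm_solve.
  - assert (Hq : Permutation (Imp A1 A2 :: G0) (Var p :: G')) by perm_solve.
    destruct (perm_cons_neq _ _ _ _ Hq ltac:(discriminate)) as (K & k1 & k2).
    destruct (Grz_impL_inv _ _ _ hl A1 A2 K ltac:(perm_solve)) as [a1 a2].
    pose proof (IH1 (A2 :: K) ltac:(perm_solve) a1) as r1.
    pose proof (IH2 K ltac:(perm_solve) ltac:(grz_perm a2)) as r2.
    apply grz_impL with A1 A2 K; auto; perm_solve.
  - pose proof (Grz_impR_inv _ _ _ hl A1 A2 (Var p :: D0) ltac:(perm_solve)) as a.
    pose proof (IH1 (A1 :: G') ltac:(perm_solve) ltac:(grz_perm a)) as r.
    apply grz_impR with A1 A2 D0; auto.
  - assert (Hq : Permutation (Box C :: G0) (Var p :: G')) by perm_solve.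
    destruct (perm_cons_neq _ _ _ _ Hq ltac:(discriminate)) as (K & k1 & k2).
    pose proof (Grz_weakenL _ C _ _ hl) as a.
    pose proof (IH1 (C :: Box C :: K) ltac:(perm_solve) ltac:(grz_perm a)) as r.
    apply grz_refl with C K; auto; perm_solve.
  - assert (Hq : Permutation (Var p :: G') (map Box Pi ++ G0)) by perm_solve.
    destruct (perm_cons_boxes _ _ _ _ Hq ltac:(discriminate)) as (K & k1 & k2).
    pose proof (Grz_boxR_inv _ _ _ hl C (Var p :: D0) ltac:(perm_solve)) as a.
    pose proof (IH1 G' Hp ltac:(grz_perm a)) as r.
    apply grz_box with Pi C K D0; auto.
Qed.

(* Removing [Box B] from the right premise [Box B, Box Pi' => C] of a (Box)
   rule: [Box Sigma => Box B] follows from [Box Sigma => B] by (Box), and the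
   two are joined by a cut inside [Deriv W]. *)
Lemma Deriv_box_premise_cut Sigma Pi B C G G1 G0 :
  Deriv W (map Box Sigma) [B] -> Deriv W (map Box Pi) [C] ->
  Permutation G (map Box Sigma ++ G1) -> Permutation (Box B :: G) (map Box Pi ++ G0) ->
  Deriv W (map Box (debox G)) [C].
Proof.
  intros hS hv hs hh.
  pose proof (Permutation_boxed_part _ _ _ hs) as e1.
  pose proof (Permutation_boxed_part _ _ _ hh) as e2. simpl in e2.
  assert (hB : Deriv W (map Box (debox G)) [B]).
  { pose proof (dv_weaken W _ _ (map Box (debox G1)) [] hS) as v. deriv_perm v. }
  assert (hBoxB : Deriv W (map Box (debox G)) [Box B]).
  { pose proof (dv_box W Sigma B (map Box (debox G1)) [] ltac:(deriv_perm hB) hS) as v.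
    deriv_perm v. }
  assert (hC : Deriv W (Box B :: map Box (debox G)) [C]).
  { pose proof (dv_weaken W _ _ (map Box (debox G0)) [] hv) as v. deriv_perm v. }
  apply (dv_cut W (Box B)); [|exact hC].
  pose proof (dv_weaken W _ _ [] [C] hBoxB) as v. deriv_perm v.
Qed.

Section BoxCut.
Variable B : form.
Hypothesis cut_B : forall G D, GW G (B :: D) -> GW (B :: G) D -> GW G D.

(* Cut on [Box B] whose left premise ends with (Box) on [Box B], with premises
   [G => B, D] and [Box Sigma => B]; the induction runs over the right premise
   [Box B, G => D] of the cut. *)
Lemma Grz_cut_box_principal Sigma (hS : Deriv W (map Box Sigma) [B]) :
  forall GG DD, GW GG DD -> forall G, Permutation GG (Box B :: G) -> GW G (B :: DD) ->
  (exists G1, Permutation G (map Box Sigma ++ G1)) -> GW G DD.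
Proof.
  induction 1 as [G D q G0 D0 h1 h2 | G D G0 h1 | G D A1 A2 G0 h1 d1 IH1 d2 IH2
    | G D A1 A2 D0 h1 d1 IH1 | G D C G0 h1 d1 IH1 | G D Pi C G0 D0 h1 h2 d1 IH1 hv];
    intros G' Hp hl [G1 hs].
  - assert (Hq : Permutation (Var q :: G0) (Box B :: G')) by perm_solve.
    destruct (perm_cons_neq _ _ _ _ Hq ltac:(discriminate)) as (K & k1 & k2).
    apply grz_atom with q K D0; perm_solve.
  - assert (Hq : Permutation (Bot :: G0) (Box B :: G')) by perm_solve.
    destruct (perm_cons_neq _ _ _ _ Hq ltac:(discriminate)) as (K & k1 & k2).
    apply grz_bot with K; perm_solve.
  - assert (Hq : Permutation (Imp A1 A2 :: G0) (Box B :: G')) by perm_solve.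
    destruct (perm_cons_neq _ _ _ _ Hq ltac:(discriminate)) as (K & k1 & k2).
    destruct (Grz_impL_inv _ _ _ hl A1 A2 K ltac:(perm_solve)) as [a1 a2].
    assert (Hq2 : Permutation (Imp A1 A2 :: K) (map Box Sigma ++ G1)) by perm_solve.
    destruct (perm_cons_boxes _ _ _ _ Hq2 ltac:(discriminate)) as (K' & k3 & k4).
    pose proof (IH1 (A2 :: K) ltac:(perm_solve) a1 ltac:(exists (A2 :: K'); perm_solve)) as r1.
    pose proof (IH2 K ltac:(perm_solve) ltac:(grz_perm a2) ltac:(exists K'; exact k4)) as r2.
    apply grz_impL with A1 A2 K; auto; perm_solve.
  - pose proof (Grz_impR_inv _ _ _ hl A1 A2 (B :: D0) ltac:(perm_solve)) as a.
    pose proof (IH1 (A1 :: G') ltac:(perm_solve) ltac:(grz_perm a)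
      ltac:(exists (A1 :: G1); perm_solve)) as r.
    apply grz_impR with A1 A2 D0; auto.
  - assert (Hq : Permutation (Box C :: G0) (Box B :: G')) by perm_solve.
    destruct (perm_cons_cases _ _ _ _ Hq) as [[e k]|(K & k1 & k2)].
    + injection e as ->.
      pose proof (Grz_weakenL _ B _ _ hl) as a.
      pose proof (IH1 (B :: G') ltac:(perm_solve) a ltac:(exists (B :: G1); perm_solve)) as r.
      exact (cut_B _ _ hl r).
    + pose proof (Grz_weakenL _ C _ _ hl) as a.
      pose proof (IH1 (C :: Box C :: K) ltac:(perm_solve) ltac:(grz_perm a)
        ltac:(exists (C :: G1); perm_solve)) as r.
      apply grz_refl with C K; auto; perm_solve.
  - pose proof (Grz_boxR_inv _ _ _ hl C (B :: D0) ltac:(perm_solve)) as a.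
    pose proof (IH1 G' Hp ltac:(grz_perm a) ltac:(exists G1; exact hs)) as r.
    apply grz_box with (debox G') C (nonboxed G') D0; auto.
    + apply debox_split.
    + apply (Deriv_box_premise_cut Sigma Pi B C G' G1 G0); auto. perm_solve.
Qed.

Lemma Grz_cut_box : forall GG DD, GW GG DD -> forall G D, Permutation GG G ->
  Permutation DD (Box B :: D) -> GW (Box B :: G) D -> GW G D.
Proof.
  induction 1 as [G D q G0 D0 h1 h2 | G D G0 h1 | G D A1 A2 G0 h1 d1 IH1 d2 IH2
    | G D A1 A2 D0 h1 d1 IH1 | G D C G0 h1 d1 IH1 | G D Pi C G0 D0 h1 h2 d1 IH1 hv];
    intros G' D' hg hd h2'.
  - assert (Hq : Permutation (Var q :: D0) (Box B :: D')) by perm_solve.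
    destruct (perm_cons_neq _ _ _ _ Hq ltac:(discriminate)) as (K & k1 & k2).
    apply grz_atom with q G0 K; perm_solve.
  - apply grz_bot with G0; perm_solve.
  - destruct (Grz_impL_inv _ _ _ h2' A1 A2 (Box B :: G0) ltac:(perm_solve)) as [a1 a2].
    pose proof (IH1 (A2 :: G0) D' ltac:(perm_solve) hd ltac:(grz_perm a1)) as r1.
    pose proof (IH2 G0 (A1 :: D') ltac:(perm_solve) ltac:(perm_solve) a2) as r2.
    apply grz_impL with A1 A2 G0; auto; perm_solve.
  - assert (Hq : Permutation (Imp A1 A2 :: D0) (Box B :: D')) by perm_solve.
    destruct (perm_cons_neq _ _ _ _ Hq ltac:(discriminate)) as (K & k1 & k2).
    pose proof (Grz_impR_inv _ _ _ h2' A1 A2 K ltac:(perm_solve)) as a.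
    pose proof (IH1 (A1 :: G') (A2 :: K) ltac:(perm_solve) ltac:(perm_solve)
      ltac:(grz_perm a)) as r.
    apply grz_impR with A1 A2 K; auto; perm_solve.
  - pose proof (Grz_weakenL _ C _ _ h2') as a.
    pose proof (IH1 (C :: Box C :: G0) D' ltac:(perm_solve) hd ltac:(grz_perm a)) as r.
    apply grz_refl with C G0; auto; perm_solve.
  - assert (Hq : Permutation (Box C :: D0) (Box B :: D')) by perm_solve.
    destruct (perm_cons_cases _ _ _ _ Hq) as [[e k]|(K & k1 & k2)].
    + injection e as ->.
      eapply (Grz_cut_box_principal Pi hv _ _ h2' G');
        [perm_solve | grz_perm d1 | exists G0; perm_solve].
    + pose proof (Grz_boxR_inv _ _ _ h2' C K ltac:(perm_solve)) as a.
      pose proof (IH1 G' (C :: K) hg ltac:(perm_solve) a) as r.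
      apply grz_box with Pi C G0 K; auto; perm_solve.
Qed.

End BoxCut.

Lemma Grz_cut : forall A G D, GW G (A :: D) -> GW (A :: G) D -> GW G D.
Proof.
  induction A as [| p | A1 IH1 A2 IH2 | B IH]; intros G D h1 h2.
  - eapply Grz_botR_elim; [exact h1 | apply Permutation_refl].
  - eapply Grz_cut_atom; [exact h2 | apply Permutation_refl | exact h1].
  - pose proof (Grz_impR_inv _ _ _ h1 A1 A2 D (Permutation_refl _)) as a.
    destruct (Grz_impL_inv _ _ _ h2 A1 A2 G (Permutation_refl _)) as [b c].
    pose proof (Grz_weakenL _ A1 _ _ b) as b'.
    exact (IH1 G D c (IH2 (A1 :: G) D a ltac:(grz_perm b'))).
  - eapply Grz_cut_box;
      [exact IH | exact h1 | apply Permutation_refl | apply Permutation_refl | exact h2].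
Qed.

End CutAdmissibility.

Inductive GrzCut (V : seqrel) : seqrel :=
| gc_atom G D p G0 D0 :
    Permutation G (Var p :: G0) -> Permutation D (Var p :: D0) -> GrzCut V G D
| gc_bot G D G0 : Permutation G (Bot :: G0) -> GrzCut V G D
| gc_impL G D A B G0 : Permutation G (Imp A B :: G0) ->
    GrzCut V (B :: G0) D -> GrzCut V G0 (A :: D) -> GrzCut V G D
| gc_impR G D A B D0 : Permutation D (Imp A B :: D0) ->
    GrzCut V (A :: G) (B :: D0) -> GrzCut V G D
| gc_refl G D B G0 : Permutation G (Box B :: G0) ->
    GrzCut V (B :: Box B :: G0) D -> GrzCut V G D
| gc_box G D Pi A G0 D0 :
    Permutation G (map Box Pi ++ G0) -> Permutation D (Box A :: D0) ->
    GrzCut V G (A :: D0) -> V (map Box Pi) [A] -> GrzCut V G D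
| gc_cut G D A : GrzCut V G (A :: D) -> GrzCut V (A :: G) D -> GrzCut V G D.

Lemma GrzCut_Grz V : forall G D, GrzCut V G D -> Grz (Deriv V) G D.
Proof.
  induction 1.
  - eapply grz_atom; eauto.
  - eapply grz_bot; eauto.
  - eapply grz_impL; eauto.
  - eapply grz_impR; eauto.
  - eapply grz_refl; eauto.
  - eapply grz_box; eauto. apply dv_hyp; auto.
  - eapply Grz_cut; eauto.
Qed.

Lemma Deriv_Grz V : forall G D, Deriv (Grz V) G D -> Grz (Deriv V) G D.
Proof.
  induction 1.
  - eapply Grz_mono; [|eauto]. intros; apply dv_hyp; auto.
  - eapply Grz_perm; eauto.
  - apply Grz_weaken; auto.
  - apply grz_atom with p G D; apply Permutation_refl.
  - apply grz_bot with G; apply Permutation_refl.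
  - apply grz_impL with A B G; auto; apply Permutation_refl.
  - apply grz_impR with A B D; auto; apply Permutation_refl.
  - apply grz_refl with B G; auto; apply Permutation_refl.
  - apply grz_box with Pi A G D; auto; try apply Permutation_refl. apply Grz_Deriv; auto.
  - eapply Grz_cut; eauto.
Qed.

Definition gfp (F : seqrel -> seqrel) : seqrel :=
  fun G D => exists X : seqrel, (forall G D, X G D -> F X G D) /\ X G D.

(* From [X <= GrzCut X]: [Deriv X <= Deriv (GrzCut X) <= Deriv (Grz (Deriv X))
   <= Grz (Deriv (Deriv X)) <= Grz (Deriv X)], the middle steps by cut admissibility. *)
Lemma gfp_GrzCut_Grz G D : gfp GrzCut G D -> gfp Grz G D.
Proof.
  intros (X & hX & hx). exists (Deriv X). split; [|apply dv_hyp; auto].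
  intros G' D' h.
  apply (Grz_mono _ _ (Deriv_idem X)), Deriv_Grz.
  apply (Deriv_mono _ _ (GrzCut_Grz X)), (Deriv_mono _ _ hX), h.
Qed.

Definition right_box_premise (r : rule) (i : nat) : Prop := r = RBox /\ i = 1.

Lemma in_tree_tail T i w : in_tree T (i :: w) -> in_tree T w.
Proof. intro h. inversion h; auto. Qed.

Lemma in_tree_lt T i w : in_tree T (i :: w) -> i < arity (snd (T w)).
Proof. intro h. inversion h; auto. Qed.

Lemma in_tree_branch_le T f : forall m n, n <= m ->
  in_tree T (branch f m) -> in_tree T (branch f n).
Proof.
  induction m; intros n hn h.
  - replace n with 0 by lia. exact h.
  - destruct (Nat.eq_dec n (S m)) as [->|ne]; auto.
    apply IHm; [lia|]. exact (in_tree_tail _ _ _ h).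
Qed.

Lemma branch_rev f : forall l, (forall n, n < length l -> f n = nth n (rev l) 0) ->
  branch f (length l) = l.
Proof.
  induction l as [|a l IH]; intro h; [reflexivity|].
  simpl. f_equal.
  - rewrite h by (simpl; lia). simpl. rewrite app_nth2; rewrite length_rev; [|lia].
    rewrite Nat.sub_diag. reflexivity.
  - apply IH. intros n hn. rewrite h by (simpl; lia). simpl. rewrite app_nth1; auto.
    rewrite length_rev; auto.
Qed.

Lemma branch_choice (P : list nat -> Prop) (Q : list nat -> nat -> Prop) w0 :
  P w0 -> (forall w, P w -> exists i, Q w i /\ P (i :: w)) ->
  exists f, branch f (length w0) = w0 /\
    forall k, P (branch f (length w0 + k)) /\
      Q (branch f (length w0 + k)) (f (length w0 + k)).
Proof.
  intros h0 hstep.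
  set (next w := epsilon (inhabits 0) (fun i => Q w i /\ P (i :: w))).
  assert (hnext : forall w, P w -> Q w (next w) /\ P (next w :: w)).
  { intros w hw. exact (epsilon_spec _ _ (hstep w hw)). }
  set (path k := Nat.iter k (fun w => next w :: w) w0).
  assert (hP : forall k, P (path k)).
  { induction k; [exact h0|]. exact (proj2 (hnext _ IHk)). }
  set (f n := if Nat.ltb n (length w0) then nth n (rev w0) 0
              else next (path (n - length w0))).
  assert (hf : forall k, f (length w0 + k) = next (path k)).
  { intro k. unfold f. replace (Nat.ltb (length w0 + k) (length w0)) with false
      by (symmetry; apply Nat.ltb_ge; lia).
    f_equal. f_equal. lia. }
  assert (hbase : branch f (length w0) = w0).
  { apply branch_rev. intros n hn. unfold f.
    replace (Nat.ltb n (length w0)) with true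
      by (symmetry; apply Nat.ltb_lt; lia). reflexivity. }
  assert (hpath : forall k, branch f (length w0 + k) = path k).
  { induction k.
    - rewrite Nat.add_0_r. exact hbase.
    - rewrite Nat.add_succ_r. simpl. rewrite IHk, hf. reflexivity. }
  exists f. split; [exact hbase|]. intro k. rewrite hpath, hf.
  split; [apply hP | apply hnext, hP].
Qed.

Section TreeToGfp.
Variable T : ptree.
Hypothesis T_correct : locally_correct true T.
Hypothesis T_progressing : progressing T.

Definition labels : seqrel := fun G D => exists w, in_tree T w /\ fst (T w) = (G, D).

Definition node_ok (w : list nat) : Prop := GrzCut labels (fst (fst (T w))) (snd (fst (T w))).

Lemma node_ok_children w : in_tree T w ->
  (forall i, i < arity (snd (T w)) -> ~ right_box_premise (snd (T w)) i -> node_ok (i :: w)) ->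
  node_ok w.
Proof.
  intros hw hc. pose proof (T_correct w hw) as L. unfold node_ok in *.
  destruct (T w) as [[G D] r] eqn:e. simpl in *.
  assert (hc' : forall i, i < arity r -> ~ right_box_premise r i ->
    forall G' D', fst (T (i :: w)) = (G', D') -> GrzCut labels G' D').
  { intros i hi hr G' D' ei. specialize (hc i hi hr). rewrite ei in hc. exact hc. }
  destruct r; simpl in L.
  - destruct L as [_ [(p & G0 & D0 & h1 & h2) | (G0 & h)]].
    + eapply gc_atom; eauto.
    + eapply gc_bot; eauto.
  - destruct L as (A & B & G0 & hp & ee). injection ee as e0 e1.
    eapply gc_impL; [eauto | apply (hc' 0) | apply (hc' 1)]; auto;
      solve [simpl; lia | intros [? ?]; discriminate].
  - destruct L as (A & B & D0 & hp & ee). injection ee as e0.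
    eapply gc_impR; [eauto | apply (hc' 0)]; auto;
      solve [simpl; lia | intros [? ?]; discriminate].
  - destruct L as (B & G0 & hp & ee). injection ee as e0.
    eapply gc_refl; [eauto | apply (hc' 0)]; auto;
      solve [simpl; lia | intros [? ?]; discriminate].
  - destruct L as (Pi & A & G0 & D0 & hp & hd & ee). injection ee as e0 e1.
    eapply gc_box; [eauto | eauto | apply (hc' 0) | ]; auto;
      try solve [simpl; lia | intros [? ?]; discriminate].
    exists (1 :: w). split; auto. apply in_child; auto. rewrite e. simpl; lia.
  - destruct L as (_ & A & ee). injection ee as e0 e1.
    apply gc_cut with A; [apply (hc' 0) | apply (hc' 1)]; auto;
      solve [simpl; lia | intros [? ?]; discriminate].
Qed.

(* A node whose label is not derivable in [GrzCut labels] has such a child that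
   is not a right (Box)-premise; following these children gives a branch that
   contradicts progress. *)
Lemma all_nodes_ok w : in_tree T w -> node_ok w.
Proof.
  intros hw0. apply NNPP; intro hbad.
  destruct (branch_choice (fun w => in_tree T w /\ ~ node_ok w)
              (fun w i => ~ right_box_premise (snd (T w)) i) w) as (f & hf0 & hf).
  - split; auto.
  - intros v [hv hn]. apply NNPP; intro hno. apply hn, node_ok_children; auto.
    intros i hi hr. apply NNPP; intro hb. apply hno. exists i.
    split; [|split]; auto. apply in_child; auto.
  - assert (Hin : forall n, in_tree T (branch f n)).
    { intro n. destruct (Nat.le_gt_cases n (length w)).
      - apply in_tree_branch_le with (length w); auto. rewrite hf0; auto.
      - replace n with (length w + (n - length w)) by lia. apply hf. }
    destruct (T_progressing f Hin (length w)) as (m & hm & hbox).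
    replace m with (length w + (m - length w)) in hbox by lia.
    exact (proj2 (hf (m - length w)) hbox).
Qed.

End TreeToGfp.

Lemma provable_gfp_GrzCut G D : provable true (G, D) -> gfp GrzCut G D.
Proof.
  intros (T & [hl hp] & hr). exists (labels T). split.
  - intros G' D' (w & hw & e). pose proof (all_nodes_ok T hl hp w hw) as g.
    unfold node_ok in g. rewrite e in g. exact g.
  - exists []. split; [constructor | exact hr].
Qed.

Inductive GrzH (V : seqrel) : nat -> seqrel :=
| gh_atom n G D p G0 D0 :
    Permutation G (Var p :: G0) -> Permutation D (Var p :: D0) -> GrzH V n G D
| gh_bot n G D G0 : Permutation G (Bot :: G0) -> GrzH V n G D
| gh_impL n m1 m2 G D A B G0 : Permutation G (Imp A B :: G0) -> m1 < n -> m2 < n ->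
    GrzH V m1 (B :: G0) D -> GrzH V m2 G0 (A :: D) -> GrzH V n G D
| gh_impR n m G D A B D0 : Permutation D (Imp A B :: D0) -> m < n ->
    GrzH V m (A :: G) (B :: D0) -> GrzH V n G D
| gh_refl n m G D B G0 : Permutation G (Box B :: G0) -> m < n ->
    GrzH V m (B :: Box B :: G0) D -> GrzH V n G D
| gh_box n m G D Pi A G0 D0 :
    Permutation G (map Box Pi ++ G0) -> Permutation D (Box A :: D0) -> m < n ->
    GrzH V m G (A :: D0) -> V (map Box Pi) [A] -> GrzH V n G D.

Lemma Grz_GrzH V : forall G D, Grz V G D -> exists n, GrzH V n G D.
Proof.
  induction 1.
  - exists 0. eapply gh_atom; eauto.
  - exists 0. eapply gh_bot; eauto.
  - destruct IHGrz1 as [m1 h1]; destruct IHGrz2 as [m2 h2].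
    exists (S (max m1 m2)). apply gh_impL with m1 m2 A B G0; auto; lia.
  - destruct IHGrz as [m h]. exists (S m). eapply gh_impR; eauto.
  - destruct IHGrz as [m h]. exists (S m). eapply gh_refl; eauto.
  - destruct IHGrz as [m h]. exists (S m). eapply gh_box; eauto.
Qed.

Lemma no_infinite_descent (h : nat -> nat) n : ~ (forall m, n <= m -> h (S m) < h m).
Proof.
  intro dec.
  assert (hk : forall k, h (n + k) + k <= h n).
  { induction k; [replace (n + 0) with n by lia; lia|].
    specialize (dec (n + k) ltac:(lia)). replace (n + S k) with (S (n + k)) by lia. lia. }
  specialize (hk (S (h n))). lia.
Qed.

Lemma map_nth_seq {A B} (f : A -> B) (l : list A) d :
  map (fun i => f (nth i l d)) (seq 0 (length l)) = map f l.
Proof.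
  induction l as [|a l IH]; [reflexivity|]. simpl. f_equal.
  rewrite <- seq_shift, map_map. exact IH.
Qed.

Definition hseq : Type := (sequent * nat)%type.

Definition hseq0 : hseq := (([], []), 0).

Definition GrzH_at (V : seqrel) (s : hseq) : Prop := GrzH V (snd s) (fst (fst s)) (snd (fst s)).

Definition height_inst (V : seqrel) (s : hseq) (r : rule) (ps : list hseq) : Prop :=
  rule_inst false (fst s) r (map fst ps) /\ length ps = arity r /\
  forall i, i < length ps -> GrzH_at V (nth i ps hseq0) /\
    (~ right_box_premise r i -> snd (nth i ps hseq0) < snd s).

Section GfpToTree.
Variable V : seqrel.
Hypothesis V_consistent : forall G D, V G D -> Grz V G D.

Lemma GrzH_height_inst s : GrzH_at V s -> exists r ps, height_inst V s r ps.
Proof.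
  destruct s as [[G D] n]. unfold GrzH_at. simpl.
  destruct 1 as [n G D p G0 D0 h1 h2 | n G D G0 h1 | n m1 m2 G D A B G0 h1 l1 l2 d1 d2
    | n m G D A B D0 h1 l1 d1 | n m G D B G0 h1 l1 d1 | n m G D Pi A G0 D0 h1 h2 l1 d1 hv].
  - exists RInit, []. split; [|split]; simpl; [|auto|intros; lia].
    split; auto. left. exists p, G0, D0; auto.
  - exists RInit, []. split; [|split]; simpl; [|auto|intros; lia].
    split; auto. right. exists G0; auto.
  - exists RImpL, [((B :: G0, D), m1); ((G0, A :: D), m2)]. split; [|split]; simpl; auto.
    + exists A, B, G0; auto.
    + intros i hi. destruct i as [|[|i]]; simpl; auto; lia.
  - exists RImpR, [((A :: G, B :: D0), m)]. split; [|split]; simpl; auto.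
    + exists A, B, D0; auto.
    + intros i hi. destruct i as [|i]; simpl; auto; lia.
  - exists RRefl, [((B :: Box B :: G0, D), m)]. split; [|split]; simpl; auto.
    + exists B, G0; auto.
    + intros i hi. destruct i as [|i]; simpl; auto; lia.
  - destruct (Grz_GrzH V _ _ (V_consistent _ _ hv)) as [m' h'].
    exists RBox, [((G, A :: D0), m); ((map Box Pi, [A]), m')].
    split; [|split]; simpl; auto.
    + exists Pi, A, G0, D0; auto.
    + intros i hi. destruct i as [|[|i]]; simpl; auto; try lia.
      split; auto. intro hn; exfalso; apply hn; split; auto.
Qed.

Definition next_inst (s : hseq) : rule * list hseq :=
  epsilon (inhabits (RInit, [])) (fun rp => height_inst V s (fst rp) (snd rp)).

Lemma next_inst_spec s : GrzH_at V s -> height_inst V s (fst (next_inst s)) (snd (next_inst s)).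
Proof.
  intro h. destruct (GrzH_height_inst s h) as (r & ps & hi).
  exact (epsilon_spec (inhabits (RInit, [])) (fun rp => height_inst V s (fst rp) (snd rp))
           (ex_intro _ (r, ps) hi)).
Qed.

Variable root : hseq.
Hypothesis root_GrzH : GrzH_at V root.

Fixpoint hseq_at (w : list nat) : hseq :=
  match w with [] => root | i :: w' => nth i (snd (next_inst (hseq_at w'))) hseq0 end.

Definition height_tree : ptree := fun w => (fst (hseq_at w), fst (next_inst (hseq_at w))).

Lemma hseq_at_GrzH w : in_tree height_tree w -> GrzH_at V (hseq_at w).
Proof.
  induction 1 as [|w i hw IH hi]; [exact root_GrzH|].
  destruct (next_inst_spec _ IH) as (_ & hlen & hps).
  unfold height_tree in hi. simpl in hi. rewrite <- hlen in hi.
  exact (proj1 (hps i hi)).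
Qed.

Lemma height_tree_correct : locally_correct false height_tree.
Proof.
  intros w hw. destruct (next_inst_spec _ (hseq_at_GrzH w hw)) as (hinst & hlen & _).
  unfold height_tree at 1 2. simpl. rewrite <- hlen, map_nth_seq. exact hinst.
Qed.

Lemma height_tree_progressing : progressing height_tree.
Proof.
  intros f hin n. apply NNPP. intro hn.
  apply (no_infinite_descent (fun m => snd (hseq_at (branch f m))) n).
  intros m hm. destruct (next_inst_spec _ (hseq_at_GrzH _ (hin m))) as (_ & hlen & hps).
  pose proof (in_tree_lt _ _ _ (hin (S m))) as hl.
  change (f m < arity (fst (next_inst (hseq_at (branch f m))))) in hl.
  rewrite <- hlen in hl.
  apply (proj2 (hps _ hl)). intro hr. apply hn. exists m. split; auto.
Qed.

End GfpToTree.

Lemma gfp_Grz_provable G D : gfp Grz G D -> provable false (G, D).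
Proof.
  intros (Y & hY & hy). destruct (Grz_GrzH Y _ _ (hY _ _ hy)) as [n hn].
  exists (height_tree Y ((G, D), n)). split; [split|].
  - apply height_tree_correct; auto.
  - apply height_tree_progressing; auto.
  - reflexivity.
Qed.

Theorem theorem6p6 : forall s : sequent, provable true s -> provable false s.
Proof.
  intros [G D] h. apply gfp_Grz_provable, gfp_GrzCut_Grz, provable_gfp_GrzCut, h.
Qed.
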